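(* Let $x_s<x_t$ be integers, let $C\ge 0$, and let $f:[x_s,x_t]\to\mathbb{R}$ be such that $([x_s,x_t],f)$ is an Ameso($C$) pair. Suppose there exist $x^0\in[x_s,x_t]$ and a positive integer $b$ with $[x^0,x^0+b]\subseteq[x_s,x_t]$ such that $f(x^0)=\min_{y\in[x^0,x^0+b]}f(y)$ and $f(x^0)+C\le\max_{y\in[x^0,x^0+b]}f(y)$. Then $f(x^0)=\min_{y\in[x^0,x_t]}f(y)$.
   Context: For integers $a\le b$, $[a,b]$ denotes the set of integers $\{a,a+1,\dots,b\}$. Floors and ceilings of vectors are taken componentwise. A set $D^n\subseteq\mathbb{Z}^n$ is an Ameso set if $\lceil(\vec x+\vec y)/2\rceil,\lfloor(\vec x+\vec y)/2\rfloor\in D^n$ for all $\vec x,\vec y\in D^n$. For $C\ge 0$, $(D^n,f)$ is an Ameso($C$) pair if $D^n$ is an Ameso set, $f:D^n\to\mathbb{R}$ is bounded below, and $f(\vec x)+f(\vec y)+C\ge f(\lceil(\vec x+\vec y)/2\rceil)+f(\lfloor(\vec x+\vec y)/2\rfloor)$ for all $\vec x,\vec y\in D^n$. *)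

From Stdlib Require Import Reals ZArith Lra Lia.
Open Scope R_scope.

(* floor and ceiling of (x + y)/2 for integers x, y.
   Z.div rounds toward -infinity, so Z.div s 2 = floor (s/2). *)
Definition zfloor_half (x y : Z) : Z := Z.div (x + y) 2.
Definition zceil_half (x y : Z) : Z := Z.opp (Z.div (Z.opp (x + y)) 2).

Definition zinterval (a b : Z) (x : Z) : Prop := (a <= x <= b)%Z.

Definition ameso_set (D : Z -> Prop) : Prop :=
  forall x y, D x -> D y -> D (zceil_half x y) /\ D (zfloor_half x y).

(* (D, f) is an Ameso(C) pair; f is only relevant on D *)
Definition ameso_pair (C : R) (D : Z -> Prop) (f : Z -> R) : Prop :=
  ameso_set D /\
  (exists m : R, forall x, D x -> m <= f x) /\
  (forall x y, D x -> D y ->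
     f x + f y + C >= f (zceil_half x y) + f (zfloor_half x y)).

(** Suppose [f z < f x0] for some [z > x0 + b] and let [m] be the rightmost
    maximiser of [f] on [[x0, z]]; since [f] does not decrease at [x0], [m > x0],
    and [f m >= f x0 + C].  Reflecting [x0] through [m] cannot stay inside
    [[x0, z]]: the midpoint inequality would make [2m - x0] another maximiser
    to the right of [m].  So [2m - z] lies in [[x0, m)], and the midpoint
    inequality for [2m - z] and [z] gives [f m <= f z + C], i.e. [f x0 <= f z]. *)
From Stdlib Require Import Reals ZArith Lra Lia.
Open Scope R_scope.

Lemma zfloor_half_double (x y m : Z) : (x + y = 2 * m)%Z -> zfloor_half x y = m.
Proof.
  intros Hm. unfold zfloor_half. rewrite Hm, Z.mul_comm. apply Z.div_mul. lia.
Qed.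

Lemma zceil_half_double (x y m : Z) : (x + y = 2 * m)%Z -> zceil_half x y = m.
Proof.
  intros Hm. unfold zceil_half. rewrite Hm.
  replace (- (2 * m))%Z with (- m * 2)%Z by lia.
  rewrite Z.div_mul by lia. lia.
Qed.

Lemma ameso_pair_midpoint (C : R) (D : Z -> Prop) (f : Z -> R) (x y m : Z) :
  ameso_pair C D f -> D x -> D y -> (x + y = 2 * m)%Z ->
  2 * f m <= f x + f y + C.
Proof.
  intros [_ [_ Hpair]] Hx Hy Hm. specialize (Hpair x y Hx Hy).
  rewrite (zceil_half_double _ _ m), (zfloor_half_double _ _ m) in Hpair by exact Hm.
  lra.
Qed.

Lemma exists_rightmost_argmax (f : Z -> R) (a c : Z) : (a <= c)%Z ->
  exists m, (a <= m <= c)%Z /\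
    (forall w, (a <= w <= c)%Z -> f w <= f m) /\
    (forall w, (m < w <= c)%Z -> f w < f m).
Proof.
  intros Hac. remember (Z.to_nat (c - a)) as n eqn:Hn.
  replace c with (a + Z.of_nat n)%Z by lia. clear c Hac Hn.
  induction n as [|n [m [Hm [Hmax Hright]]]].
  - exists a. split; [lia|]. split; intros w Hw.
    + replace w with a by lia. lra.
    + lia.
  - set (c := (a + Z.of_nat (S n))%Z).
    destruct (Rle_dec (f m) (f c)) as [Hle|Hgt].
    + exists c. split; [lia|]. split; intros w Hw; [|lia].
      destruct (Z.eq_dec w c) as [->|Hne]; [lra|].
      pose proof (Hmax w ltac:(lia)). lra.
    + exists m. split; [lia|]. split; intros w Hw;
        (destruct (Z.eq_dec w c) as [->|Hne]; [lra|]).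
      * apply Hmax. lia.
      * apply Hright. lia.
Qed.

Section MidpointConvexInterval.

Variables (f : Z -> R) (C : R) (a c : Z).

Hypothesis midpoint_le : forall x y m, (a <= x <= c)%Z -> (a <= y <= c)%Z ->
  (x + y = 2 * m)%Z -> 2 * f m <= f x + f y + C.

Lemma rightmost_max_le_right_end (m : Z) : (a < m <= c)%Z ->
  (forall w, (a <= w <= c)%Z -> f w <= f m) ->
  (forall w, (m < w <= c)%Z -> f w < f m) ->
  f a + C <= f m -> f m <= f c + C.
Proof.
  intros Hm Hmax Hright Hrise.
  destruct (Z_le_gt_dec (2 * m - a) c) as [Hin|Hout].
  - pose proof (midpoint_le a (2 * m - a) m ltac:(lia) ltac:(lia) ltac:(lia)).
    pose proof (Hright (2 * m - a)%Z ltac:(lia)). lra.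
  - pose proof (midpoint_le (2 * m - c) c m ltac:(lia) ltac:(lia) ltac:(lia)).
    pose proof (Hmax (2 * m - c)%Z ltac:(lia)). lra.
Qed.

Lemma rise_le_right_end : (a < c)%Z -> f a <= f (a + 1)%Z ->
  (exists y, (a <= y <= c)%Z /\ f a + C <= f y) -> f a <= f c.
Proof.
  intros Hac Hstep [y [Hy Hrise]].
  destruct (exists_rightmost_argmax f a c) as [m [Hm [Hmax Hright]]]; [lia|].
  assert (Ham : (a < m)%Z).
  { destruct (Z.eq_dec m a) as [->|Hne]; [|lia].
    pose proof (Hright (a + 1)%Z ltac:(lia)). lra. }
  pose proof (Hmax y Hy).
  pose proof (rightmost_max_le_right_end m ltac:(lia) Hmax Hright ltac:(lra)).
  lra.
Qed.

End MidpointConvexInterval.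

Theorem lemma3 (xs xt : Z) (C : R) (f : Z -> R) :
  (xs < xt)%Z -> 0 <= C ->
  ameso_pair C (zinterval xs xt) f ->
  forall (x0 b : Z),
    (0 < b)%Z ->
    (forall y, zinterval x0 (x0 + b) y -> zinterval xs xt y) ->
    (* f(x0) = min_{y in [x0, x0+b]} f(y) *)
    (forall y, zinterval x0 (x0 + b) y -> f x0 <= f y) ->
    (* f(x0) + C <= max_{y in [x0, x0+b]} f(y) *)
    (exists y, zinterval x0 (x0 + b) y /\ f x0 + C <= f y) ->
    (* f(x0) = min_{y in [x0, xt]} f(y) *)
    forall y, zinterval x0 xt y -> f x0 <= f y.
Proof.
  intros _ _ Hpair x0 b Hb Hsub Hmin [y [Hy Hrise]] z Hz.
  unfold zinterval in *.
  destruct (Z_le_gt_dec z (x0 + b)) as [Hzb|Hzb]; [apply Hmin; lia|].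
  assert (Hx0 : (xs <= x0)%Z) by (destruct (Hsub x0 ltac:(lia)); lia).
  apply (rise_le_right_end f C x0 z).
  - intros u v m Hu Hv Huv.
    apply (ameso_pair_midpoint C (zinterval xs xt)); unfold zinterval; auto; lia.
  - lia.
  - apply Hmin. lia.
  - exists y. split; [lia | exact Hrise].
Qed.
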